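(* Let $\delta\in(0,1/2)$ and let $y_0>2$ be such that for every $y\in[2,y_0]$ and $R>2$ the map $x\mapsto g_R(x,y)x^{-\delta}$ is non-increasing on $(0,\infty)$. Then for all $R>2$, $x\ge0$, $y\in[2,y_0]$: (i) $xg_R(x,y)\le(1+\delta)\rho_R(x,y)$; (ii) $xg_R(x,y)^2\le(1+2\delta)h_R(x,y)$; (iii) $xh_R(x,y)\le(1+\delta)^2\rho_R(x,y)^2$; (iv) $xg_R(x,y)^2-h_R(x,y)\le\dfrac{2\delta(1+\delta)}{1+2\delta}\rho_R(x,y)g_R(x,y)$; (v) $\rho_R(x,y)^2\le2(1+2\delta)\phi_R(x,y)\le2(1+2\delta)\tau(x,y)$; (vi) $(\partial_x\psi_R(x,y))^2\le(1+2\delta)g_R(x,y)^2$.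
   Context: Let $\xi$ be a nondecreasing $C^2$ function on $[0,\infty)$ with $\xi(x)=(x-1)^3\vee0$ for $x\in[0,3/2]$ and $\xi(x)=1$ for $x\ge2$. For $x\ge0$, $y\ge2$: $\zeta(x,y)=2x+(yx^{y-1}-2x)\xi(x)$, $\tau(x,y)=\int_0^x\zeta(s,y)\,ds$. For $R>2$: $g_R(x,y)=\sqrt{(\partial_x\zeta)(x\wedge R,y)}$, $h_R(x,y)=\int_0^xg_R(s,y)^2\,ds$, $\phi_R(x,y)=\int_0^xh_R(s,y)\,ds$, $\rho_R(x,y)=\int_0^xg_R(s,y)\,ds$, $\psi_R(x,y)=\sqrt{xh_R(x,y)}$ (at $x=0$, $\partial_x\psi_R$ denotes the right derivative). *)

From Stdlib Require Import Reals Lra Classical ClassicalEpsilon.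
Open Scope R_scope.

(* Real power with the convention x^a := 0 for x <= 0 (only used with x >= 0). *)
Definition rpow (x a : R) : R :=
  if Rlt_dec 0 x then Rpower x a else 0.

(* Riemann integral \int_a^b f, made total (0 if f is not Riemann integrable). *)
Definition integral (f : R -> R) (a b : R) : R :=
  match excluded_middle_informative (inhabited (Riemann_integrable f a b)) with
  | left H => RiemannInt (epsilon H (fun _ => True))
  | right _ => 0
  end.

Definition right_deriv_lim (f : R -> R) (x l : R) : Prop :=
  forall eps, 0 < eps -> exists d, 0 < d /\
    forall h, 0 < h < d -> Rabs ((f (x + h) - f x) / h - l) < eps.

(* Derivative of a function defined on [0,oo): the usual derivative at x > 0,
   the right derivative at x = 0 (value 0 if it does not exist). *)
Definition pDx (f : R -> R) (x : R) : R :=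
  if Rlt_dec 0 x then
    match excluded_middle_informative (exists l, derivable_pt_lim f x l) with
    | left H => proj1_sig (constructive_indefinite_description _ H)
    | right _ => 0
    end
  else
    match excluded_middle_informative (exists l, right_deriv_lim f x l) with
    | left H => proj1_sig (constructive_indefinite_description _ H)
    | right _ => 0
    end.

(* xi is C^2 on (0,oo) (together with xi = 0 on [0,1] this is C^2 on [0,oo)). *)
Definition C2_pos (xi : R -> R) : Prop :=
  exists xi1 xi2 : R -> R,
    forall x, 0 < x ->
      derivable_pt_lim xi x (xi1 x) /\ derivable_pt_lim xi1 x (xi2 x) /\
      continuity_pt xi2 x.

Definition zeta (xi : R -> R) (x y : R) : R :=
  2 * x + (y * rpow x (y - 1) - 2 * x) * xi x.

Definition tau (xi : R -> R) (x y : R) : R :=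
  integral (fun s => zeta xi s y) 0 x.

Definition gR (xi : R -> R) (R0 x y : R) : R :=
  sqrt (pDx (fun s => zeta xi s y) (Rmin x R0)).

Definition hR (xi : R -> R) (R0 x y : R) : R :=
  integral (fun s => (gR xi R0 s y) ^ 2) 0 x.

Definition phiR (xi : R -> R) (R0 x y : R) : R :=
  integral (fun s => hR xi R0 s y) 0 x.

Definition rhoR (xi : R -> R) (R0 x y : R) : R :=
  integral (fun s => gR xi R0 s y) 0 x.

Definition psiR (xi : R -> R) (R0 x y : R) : R :=
  sqrt (x * hR xi R0 x y).

From Stdlib Require Import Reals Lra Classical ClassicalEpsilon.
From Coquelicot Require Import Coquelicot.
Open Scope R_scope.

(* Write k := g_R(., y), so that k^2 = d zeta/dx (min x R, y) is 2 on [0, 1], at least 2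
   everywhere, and nondecreasing on [2, oo).  The monotonicity of k(x) x^(-delta) gives
   k(s) >= k(x) (s/x)^delta for s <= x; integrating this lower bound yields (i) and (ii),
   and (iv) combines the two.  On [1, 2] it also gives k^2 <= 2 * 2^(2 delta) <= 2 (1 + 2 delta),
   hence k <= max(sqrt(2 (1 + 2 delta)), k(x)) on [0, x].  With k >= sqrt 2 this bound gives
   (iii) and the pointwise inequality rho k <= (1 + 2 delta) h, which is the derivative form
   of (v); (vi) follows from (ii) and h(x) <= x k(x)^2 + 4 delta x.  Finally phi <= tau since
   h' = k^2 <= d zeta/dx. *)

(** * One-sided derivatives and [pDx] *)

Lemma derivable_pt_lim_le_of_one_sided (f : R -> R) x l c d :
  derivable_pt_lim f x l -> 0 < d ->
  (forall h, 0 < h < d -> (f (x + h) - f x) / h <= c) \/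
  (forall h, 0 < h < d -> (f (x + - h) - f x) / - h <= c) ->
  l <= c.
Proof.
  intros Hl Hd Hside.
  destruct (Rle_or_lt l c) as [|Hlt]; [assumption|exfalso].
  destruct (Hl (l - c)) as [[e He] Hq]; [lra|]; simpl in Hq.
  set (h := Rmin (d / 2) (e / 2)).
  assert (Hh : 0 < h < d /\ h < e) by (unfold h, Rmin; destruct Rle_dec; lra).
  destruct Hside as [Hq' | Hq'].
  - specialize (Hq h ltac:(lra) ltac:(rewrite Rabs_right; lra)).
    specialize (Hq' h ltac:(lra)). apply Rabs_def2 in Hq. lra.
  - specialize (Hq (- h) ltac:(lra) ltac:(rewrite Rabs_left; lra)).
    specialize (Hq' h ltac:(lra)). apply Rabs_def2 in Hq. lra.
Qed.

Lemma right_deriv_lim_unique f x l1 l2 :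
  right_deriv_lim f x l1 -> right_deriv_lim f x l2 -> l1 = l2.
Proof.
  intros H1 H2.
  destruct (Req_dec l1 l2) as [|Hne]; [assumption|exfalso].
  assert (He : 0 < Rabs (l1 - l2) / 2).
  { assert (Hne' : l1 - l2 <> 0) by lra. pose proof (Rabs_pos_lt _ Hne'). lra. }
  destruct (H1 _ He) as [d1 [Hd1 P1]]. destruct (H2 _ He) as [d2 [Hd2 P2]].
  set (h := Rmin (d1 / 2) (d2 / 2)).
  assert (Hh : 0 < h < d1 /\ h < d2) by (unfold h, Rmin; destruct Rle_dec; lra).
  specialize (P1 h ltac:(lra)). specialize (P2 h ltac:(lra)).
  set (q := (f (x + h) - f x) / h) in *.
  pose proof (Rabs_triang (q - l2) (- (q - l1))) as T.
  rewrite Rabs_Ropp in T. replace (q - l2 + - (q - l1)) with (l1 - l2) in T by ring. lra.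
Qed.

Lemma locally_of_gt (P : R -> Prop) a t : a < t -> (forall s, a < s -> P s) -> locally t P.
Proof.
  intros Ht HP. exists (mkposreal (t - a) ltac:(lra)). intros s Hs. apply HP.
  change (Rabs (s - t) < t - a) in Hs. apply Rabs_def2 in Hs. lra.
Qed.

Lemma locally_of_lt (P : R -> Prop) a t : t < a -> (forall s, s < a -> P s) -> locally t P.
Proof.
  intros Ht HP. exists (mkposreal (a - t) ltac:(lra)). intros s Hs. apply HP.
  change (Rabs (s - t) < a - t) in Hs. apply Rabs_def2 in Hs. lra.
Qed.

Lemma derivable_pt_lim_ext_gt f g a x l : a < x -> (forall s, a < s -> f s = g s) ->
  derivable_pt_lim f x l -> derivable_pt_lim g x l.
Proof.
  intros Hx Hfg Hf. apply is_derive_Reals in Hf. apply is_derive_Reals.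
  apply (is_derive_ext_loc f); [|exact Hf]. exact (locally_of_gt _ a x Hx Hfg).
Qed.

Lemma right_deriv_lim_ext f g x l : (forall s, x <= s -> f s = g s) ->
  right_deriv_lim f x l -> right_deriv_lim g x l.
Proof.
  intros Hfg Hf eps Heps. destruct (Hf eps Heps) as [d [Hd Hq]].
  exists d. split; [exact Hd|]. intros h Hh. rewrite <- !Hfg by lra. exact (Hq h Hh).
Qed.

Lemma pDx_pos f x l : 0 < x -> derivable_pt_lim f x l -> pDx f x = l.
Proof.
  intros Hx Hl. unfold pDx. destruct (Rlt_dec 0 x); [|lra].
  destruct (excluded_middle_informative _) as [H|H]; [|exfalso; eauto].
  destruct (constructive_indefinite_description _ H) as [l' Hl']. simpl.
  eapply uniqueness_limite; eauto.
Qed.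

Lemma pDx_zero f l : right_deriv_lim f 0 l -> pDx f 0 = l.
Proof.
  intros Hl. unfold pDx. destruct (Rlt_dec 0 0); [lra|].
  destruct (excluded_middle_informative _) as [H|H]; [|exfalso; eauto].
  destruct (constructive_indefinite_description _ H) as [l' Hl']. simpl.
  eapply right_deriv_lim_unique; eauto.
Qed.

Lemma pDx_ext_nonneg f g x : 0 <= x -> (forall s, 0 <= s -> f s = g s) ->
  pDx f x = pDx g x.
Proof.
  intros Hx Hfg. destruct (Rle_lt_or_eq_dec 0 x Hx) as [Hx'|<-].
  - assert (Hfg' : forall s, 0 < s -> f s = g s) by (intros; apply Hfg; lra).
    assert (Hgf' : forall s, 0 < s -> g s = f s) by (intros; symmetry; apply Hfg; lra).
    destruct (classic (exists l, derivable_pt_lim f x l)) as [[l Hl]|Hn].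
    + rewrite (pDx_pos f x l), (pDx_pos g x l); eauto using derivable_pt_lim_ext_gt.
    + unfold pDx. destruct (Rlt_dec 0 x); [|lra].
      destruct (excluded_middle_informative _) as [[l Hl]|]; [exfalso; eauto|].
      destruct (excluded_middle_informative _) as [[l Hl]|]; [|reflexivity].
      exfalso; eauto using derivable_pt_lim_ext_gt.
  - assert (Hgf : forall s, 0 <= s -> g s = f s) by (intros; symmetry; auto).
    destruct (classic (exists l, right_deriv_lim f 0 l)) as [[l Hl]|Hn].
    + rewrite (pDx_zero f l), (pDx_zero g l); eauto using right_deriv_lim_ext.
    + unfold pDx. destruct (Rlt_dec 0 0); [lra|].
      destruct (excluded_middle_informative _) as [[l Hl]|]; [exfalso; eauto|].
      destruct (excluded_middle_informative _) as [[l Hl]|]; [|reflexivity].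
      exfalso; eauto using right_deriv_lim_ext.
Qed.

Lemma integral_eq_RInt f g a b : a <= b -> (forall x, a <= x <= b -> f x = g x) ->
  ex_RInt g a b -> integral f a b = RInt g a b.
Proof.
  intros Hab Hfg Hg.
  assert (Hext : forall x, Rmin a b < x < Rmax a b -> g x = f x).
  { rewrite Rmin_left, Rmax_right by lra. intros x Hx. symmetry; apply Hfg; lra. }
  rewrite (RInt_ext g f) by exact Hext.
  unfold integral. destruct (excluded_middle_informative _) as [H|H].
  - symmetry; apply RInt_Reals.
  - exfalso. apply H. constructor. apply ex_RInt_Reals_0, (ex_RInt_ext g); assumption.
Qed.

(** * Primitives and real powers *)

Lemma continuous_Rplus (f g : R -> R) t :
  continuous f t -> continuous g t -> continuous (fun s => f s + g s) t.
Proof. apply (continuous_plus f g). Qed.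

Lemma continuous_Rminus (f g : R -> R) t :
  continuous f t -> continuous g t -> continuous (fun s => f s - g s) t.
Proof. apply (continuous_minus f g). Qed.

Lemma continuous_Rmult (f g : R -> R) t :
  continuous f t -> continuous g t -> continuous (fun s => f s * g s) t.
Proof. apply (continuous_mult f g). Qed.

Lemma continuous_of_1_lipschitz (g : R -> R) t :
  (forall u v, Rabs (g u - g v) <= Rabs (u - v)) -> continuous g t.
Proof.
  intros Hg. apply filterlim_locally. intros eps. exists eps. intros s Hs.
  change (Rabs (g s - g t) < eps). change (Rabs (s - t) < eps) in Hs.
  specialize (Hg s t). lra.
Qed.

Definition prim (f : R -> R) (t : R) : R := RInt f 0 t.

Definition sq (f : R -> R) (t : R) : R := f t ^ 2.

Lemma sq_cont f : (forall t, continuous f t) -> forall t, continuous (sq f) t.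
Proof.
  intros Hf t. apply (continuous_ext (fun s => mult (f s) (f s))).
  - intros s. unfold sq, mult; simpl. ring.
  - apply (continuous_mult f f); apply Hf.
Qed.

Lemma ex_RInt_cont (f : R -> R) a b : (forall t, continuous f t) -> ex_RInt f a b.
Proof. intros Hf. apply (ex_RInt_continuous (V := R_CompleteNormedModule)). auto. Qed.

Lemma prim_0 f : prim f 0 = 0.
Proof. unfold prim. rewrite RInt_point. reflexivity. Qed.

Lemma prim_const c x : prim (fun _ => c) x = c * x.
Proof. unfold prim. rewrite RInt_const. unfold scal; simpl; unfold mult; simpl. ring. Qed.

Lemma prim_scal f c x : (forall t, continuous f t) ->
  prim (fun t => c * f t) x = c * prim f x.
Proof. intros Hf. apply (RInt_scal f). apply ex_RInt_cont, Hf. Qed.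

Lemma prim_derive f t : (forall t, continuous f t) -> is_derive (prim f) t (f t).
Proof.
  intros Hf. apply is_derive_RInt with 0; [|apply Hf].
  apply filter_forall. intros b. exact (RInt_correct _ _ _ (ex_RInt_cont f 0 b Hf)).
Qed.

Lemma prim_cont f : (forall t, continuous f t) -> forall t, continuous (prim f) t.
Proof. intros Hf t. apply (ex_derive_continuous (prim f)). eexists. apply prim_derive, Hf. Qed.

Lemma prim_le f g x : 0 <= x -> (forall t, continuous f t) -> (forall t, continuous g t) ->
  (forall s, 0 <= s <= x -> f s <= g s) -> prim f x <= prim g x.
Proof.
  intros Hx Hf Hg Hfg. apply RInt_le; auto using ex_RInt_cont.
  intros s Hs. apply Hfg. lra.
Qed.

Lemma prim_of_derive z Z x : (forall t, is_derive z t (Z t)) ->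
  (forall t, continuous Z t) -> z 0 = 0 -> prim Z x = z x.
Proof.
  intros Dz Cz z0. apply is_RInt_unique.
  replace (z x) with (minus (z x) (z 0)) by (rewrite z0; unfold minus, plus, opp, zero; simpl; ring).
  exact (is_RInt_derive z Z 0 x (fun t _ => Dz t) (fun t _ => Cz t)).
Qed.

Lemma prim_prim_le_of_derive f z Z x : 0 <= x -> (forall t, continuous f t) ->
  (forall t, is_derive z t (Z t)) -> (forall t, continuous Z t) -> z 0 = 0 ->
  (forall t, 0 <= t -> f t <= Z t) -> prim (prim f) x <= prim z x.
Proof.
  intros Hx Hf Dz Cz z0 HfZ.
  apply prim_le; [exact Hx | apply prim_cont, Hf | | ].
  - intros t. apply (ex_derive_continuous z). eexists. apply Dz.
  - intros s Hs. rewrite <- (prim_of_derive z Z s) by auto.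
    apply prim_le; [lra | exact Hf | exact Cz | intros t Ht; apply HfZ; lra].
Qed.

Lemma nonneg_of_derive_nonneg F F' x : 0 <= x -> F 0 = 0 ->
  (forall t, derivable_pt_lim F t (F' t)) -> (forall t, 0 <= t <= x -> 0 <= F' t) -> 0 <= F x.
Proof.
  intros Hx F0 DF HF'. destruct (Rle_lt_or_eq_dec 0 x Hx) as [Hx'|<-]; [|lra].
  destruct (MVT_cor2 F F' 0 x Hx' (fun c _ => DF c)) as [c [E Hc]].
  specialize (HF' c ltac:(lra)). nra.
Qed.

Lemma Rpower_pos s a : 0 < Rpower s a.
Proof. apply exp_pos. Qed.

Lemma Rpower_derive t a : 0 < t -> is_derive (fun s => Rpower s a) t (a * Rpower t (a - 1)).
Proof. intros Ht. apply is_derive_Reals, derivable_pt_lim_power, Ht. Qed.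

Lemma Rpower_cont a t : 0 < t -> continuous (fun s => Rpower s a) t.
Proof. intros Ht. apply (ex_derive_continuous (fun s => Rpower s a)). eexists. apply Rpower_derive, Ht. Qed.

Lemma Rpower_succ t a : 0 < t -> Rpower t (a + 1) = t * Rpower t a.
Proof. intros Ht. rewrite Rpower_plus, Rpower_1 by exact Ht. ring. Qed.

Lemma Rpower_base_1 a : Rpower 1 a = 1.
Proof. unfold Rpower. rewrite ln_1, Rmult_0_r. apply exp_0. Qed.

Lemma RInt_Rpower p e x : 0 <= p -> 0 < e <= x ->
  RInt (fun s => Rpower s p) e x = (Rpower x (p + 1) - Rpower e (p + 1)) / (p + 1).
Proof.
  intros Hp He. apply is_RInt_unique.
  replace ((Rpower x (p + 1) - Rpower e (p + 1)) / (p + 1)) with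
    (minus (Rpower x (p + 1) / (p + 1)) (Rpower e (p + 1) / (p + 1)))
    by (unfold minus, plus, opp; simpl; field; lra).
  apply (is_RInt_derive (fun s => Rpower s (p + 1) / (p + 1)));
    intros s Hs; rewrite Rmin_left, Rmax_right in Hs by lra.
  - apply (is_derive_ext (fun s => / (p + 1) * Rpower s (p + 1)));
      [intros u; apply Rmult_comm|].
    replace (Rpower s p) with (/ (p + 1) * ((p + 1) * Rpower s (p + 1 - 1)))
      by (replace (p + 1 - 1) with p by ring; field; lra).
    apply (is_derive_scal (fun s => Rpower s (p + 1))), Rpower_derive. lra.
  - apply Rpower_cont. lra.
Qed.

Lemma RInt_ge_power f A p e x : (forall t, continuous f t) -> 0 <= p -> 0 < e <= x ->
  (forall s, e <= s <= x -> A * Rpower s p <= f s) ->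
  A * (Rpower x (p + 1) - Rpower e (p + 1)) <= (p + 1) * RInt f e x.
Proof.
  intros Hf Hp He HfA.
  assert (Hpow : ex_RInt (fun s => Rpower s p) e x).
  { apply (ex_RInt_continuous (V := R_CompleteNormedModule)).
    rewrite Rmin_left, Rmax_right by lra. intros s Hs. apply Rpower_cont. lra. }
  assert (Hcmp : RInt (fun s => A * Rpower s p) e x <= RInt f e x).
  { apply RInt_le; [lra | apply (ex_RInt_scal (fun s => Rpower s p)), Hpow |
                    apply ex_RInt_cont, Hf | intros s Hs; apply HfA; lra]. }
  rewrite (RInt_scal (fun s => Rpower s p)), RInt_Rpower in Hcmp by (exact Hpow || lra).
  change (A * ((Rpower x (p + 1) - Rpower e (p + 1)) / (p + 1)) <= RInt f e x) in Hcmp.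
  replace (A * (Rpower x (p + 1) - Rpower e (p + 1)))
    with ((p + 1) * (A * ((Rpower x (p + 1) - Rpower e (p + 1)) / (p + 1)))) by (field; lra).
  apply Rmult_le_compat_l; lra.
Qed.

(* Since [Rpower 0 p = 1] is a junk value, the power is integrated over [(e, x)] only,
   and then [e] tends to [0]. *)
Lemma prim_ge_power f A p x : (forall t, continuous f t) -> 0 <= A -> 0 <= p -> 0 < x ->
  (forall t, 0 <= t <= x -> 0 <= f t) -> (forall s, 0 < s <= x -> A * Rpower s p <= f s) ->
  A * Rpower x (1 + p) <= (1 + p) * prim f x.
Proof.
  intros Hf HA Hp Hx Hf0 HfA. rewrite (Rplus_comm 1 p).
  assert (Htail : forall e, 0 < e <= x ->
            A * (Rpower x (p + 1) - Rpower e (p + 1)) <= (p + 1) * prim f x).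
  { intros e He. unfold prim.
    rewrite <- (RInt_Chasles f 0 e x) by apply ex_RInt_cont, Hf.
    change (plus (RInt f 0 e) (RInt f e x)) with (prim f e + RInt f e x).
    assert (Hhead : 0 <= prim f e).
    { rewrite <- (Rmult_0_l e), <- prim_const.
      apply prim_le; [lra | intros; apply continuous_const | exact Hf |].
      intros s Hs. apply Hf0. lra. }
    pose proof (RInt_ge_power f A p e x Hf Hp He ltac:(intros s Hs; apply HfA; lra)).
    nra. }
  apply Rle_plus_epsilon. intros eps Heps.
  pose proof (Rpower_pos x p) as Hxp.
  set (e := Rmin x (eps / (A * Rpower x p + 1))).
  assert (He : 0 < e <= x) by
    (unfold e, Rmin; destruct Rle_dec; split; try apply Rdiv_lt_0_compat; nra).
  assert (Hee : e * (A * Rpower x p + 1) <= eps).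
  { apply (Rmult_le_reg_r (/ (A * Rpower x p + 1))); [apply Rinv_0_lt_compat; nra|].
    rewrite Rmult_assoc, Rinv_r, Rmult_1_r by nra. apply Rmin_r. }
  assert (Hep : Rpower e (p + 1) <= e * Rpower x p).
  { rewrite Rpower_succ by lra. apply Rmult_le_compat_l; [lra|]. apply Rle_Rpower_l; lra. }
  specialize (Htail e He). nra.
Qed.

(* [1 + u - 2^u] is concave and vanishes at [u = 0] and [u = 1]. *)
Lemma Rpower_2_le t : 0 <= t <= 1 -> Rpower 2 t <= 1 + t.
Proof.
  intros Ht.
  destruct (Rle_or_lt (Rpower 2 t) (1 + t)) as [|Hlt]; [assumption|exfalso].
  assert (Ht' : 0 < t < 1).
  { split; apply Rnot_le_lt; intros Hle;
      [replace t with 0 in Hlt by lra; rewrite Rpower_O in Hlt |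
       replace t with 1 in Hlt by lra; rewrite Rpower_1 in Hlt]; lra. }
  set (f := fun u => 1 + u - exp (u * ln 2)).
  set (f' := fun u => 1 - ln 2 * exp (u * ln 2)).
  assert (Df : forall c, derivable_pt_lim f c (f' c)).
  { intros c. apply is_derive_Reals. unfold f, f'. auto_derive; auto. ring. }
  assert (Hln2 : 0 < ln 2) by (rewrite <- ln_1; apply ln_increasing; lra).
  assert (F0 : f 0 = 0) by (unfold f; rewrite Rmult_0_l, exp_0; ring).
  assert (F1 : f 1 = 0) by (unfold f; rewrite Rmult_1_l, exp_ln by lra; ring).
  assert (Ft : f t < 0) by (unfold f, Rpower in *; lra).
  destruct (MVT_cor2 f f' 0 t (proj1 Ht') (fun c _ => Df c)) as [c1 [E1 H1]].
  destruct (MVT_cor2 f f' t 1 (proj2 Ht') (fun c _ => Df c)) as [c2 [E2 H2]].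
  assert (exp (c1 * ln 2) < exp (c2 * ln 2)) by (apply exp_increasing; nra).
  assert (f' c1 < 0) by nra.
  assert (0 < f' c2) by nra.
  unfold f' in *. nra.
Qed.

(** * The six inequalities for an abstract profile *)

(* The properties of [x |-> g_R(x, y)] that the six inequalities actually use. *)
Record profile (k : R -> R) (d : R) : Prop := {
  profile_cont : forall t, continuous k t;
  profile_ge0 : forall t, 0 <= k t;
  profile_sq_ge2 : forall t, 2 <= k t ^ 2;
  profile_sq_small : forall t, t <= 1 -> k t ^ 2 = 2;
  profile_weighted_noninc : forall x1 x2, 0 < x1 -> x1 <= x2 ->
    k x2 * Rpower x2 (- d) <= k x1 * Rpower x1 (- d);
  profile_mono_tail : forall s x, 2 <= s <= x -> k s <= k x
}.

Section Profile.

Variables (k : R -> R) (d : R).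
Hypothesis Hk : profile k d.
Hypothesis Hd : 0 < d < 1/2.

Local Notation rho := (prim k).
Local Notation h := (prim (sq k)).

Let k_cont : forall t, continuous k t := profile_cont k d Hk.
Let k_ge0 : forall t, 0 <= k t := profile_ge0 k d Hk.
Let k_sq_ge2 : forall t, 2 <= k t ^ 2 := profile_sq_ge2 k d Hk.
Let sqk_cont : forall t, continuous (sq k) t := sq_cont k k_cont.

Lemma profile_le_pow x1 x2 : 0 < x1 <= x2 -> k x2 * Rpower x1 d <= k x1 * Rpower x2 d.
Proof.
  intros Hx. pose proof (profile_weighted_noninc k d Hk x1 x2 ltac:(lra) ltac:(lra)) as Hw.
  rewrite !Rpower_Ropp in Hw.
  pose proof (Rpower_pos x1 d). pose proof (Rpower_pos x2 d).
  apply (Rmult_le_compat_r (Rpower x1 d * Rpower x2 d)) in Hw; [|nra].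
  replace (k x2 * / Rpower x2 d * (Rpower x1 d * Rpower x2 d)) with (k x2 * Rpower x1 d) in Hw
    by (field; lra).
  replace (k x1 * / Rpower x1 d * (Rpower x1 d * Rpower x2 d)) with (k x1 * Rpower x2 d) in Hw
    by (field; lra).
  exact Hw.
Qed.

Lemma profile_ge_sqrt2 t : sqrt 2 <= k t.
Proof. rewrite <- (sqrt_pow2 (k t)) by apply k_ge0. apply sqrt_le_1_alt, k_sq_ge2. Qed.

Lemma profile_sq_le_small s : s <= 2 -> k s ^ 2 <= 2 * (1 + 2 * d).
Proof.
  intros Hs. destruct (Rle_or_lt s 1) as [Hs1|Hs1].
  { rewrite (profile_sq_small k d Hk s Hs1). lra. }
  pose proof (profile_le_pow 1 s ltac:(lra)) as Hks.
  rewrite Rpower_base_1, Rmult_1_r in Hks.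
  assert (Hsd : Rpower s d <= Rpower 2 d) by (apply Rle_Rpower_l; lra).
  assert (H2d : Rpower 2 d * Rpower 2 d <= 1 + 2 * d).
  { rewrite <- Rpower_plus. replace (d + d) with (2 * d) by ring. apply Rpower_2_le. lra. }
  pose proof (Rpower_pos s d).
  assert (Hsq : k s ^ 2 <= (k 1 * Rpower s d) ^ 2) by (apply pow_incr; split; auto).
  rewrite Rpow_mult_distr, (profile_sq_small k d Hk 1) in Hsq by lra.
  nra.
Qed.

Lemma profile_lower_bound s x : 0 < s <= x -> k x * / Rpower x d * Rpower s d <= k s.
Proof.
  intros Hs. pose proof (profile_le_pow s x Hs). pose proof (Rpower_pos x d).
  apply (Rmult_le_reg_r (Rpower x d)); [lra|].
  replace (k x * / Rpower x d * Rpower s d * Rpower x d) with (k x * Rpower s d) by (field; lra).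
  exact H.
Qed.

Lemma profile_le_max s x : 0 <= s <= x -> k s <= Rmax (sqrt (2 * (1 + 2 * d))) (k x).
Proof.
  intros Hs. destruct (Rle_or_lt s 2) as [Hs2|Hs2].
  - eapply Rle_trans; [|apply Rmax_l].
    rewrite <- (sqrt_pow2 (k s)) by apply k_ge0.
    apply sqrt_le_1_alt, profile_sq_le_small, Hs2.
  - eapply Rle_trans; [|apply Rmax_r]. apply (profile_mono_tail k d Hk). lra.
Qed.

Lemma profile_sq_le_add s x : 0 <= s <= x -> k s ^ 2 <= k x ^ 2 + 4 * d.
Proof.
  intros Hs. destruct (Rle_or_lt s 2) as [Hs2|Hs2].
  - pose proof (profile_sq_le_small s Hs2). pose proof (k_sq_ge2 x). lra.
  - assert (k s <= k x) by (apply (profile_mono_tail k d Hk); lra).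
    pose proof (k_ge0 s). pose proof (pow_incr (k s) (k x) 2 ltac:(lra)). lra.
Qed.

Lemma mul_le_rho x : 0 <= x -> x * k x <= (1 + d) * rho x.
Proof.
  intros Hx. destruct (Rle_lt_or_eq_dec 0 x Hx) as [Hx'|<-].
  2:{ rewrite prim_0. lra. }
  pose proof (Rpower_pos x d). pose proof (k_ge0 x).
  replace (x * k x) with (k x * / Rpower x d * Rpower x (1 + d))
    by (rewrite Rpower_plus, Rpower_1 by lra; field; lra).
  apply prim_ge_power; auto; try lra.
  - apply Rmult_le_pos; [lra|]. apply Rlt_le, Rinv_0_lt_compat. lra.
  - intros s Hs. apply profile_lower_bound. lra.
Qed.

Lemma mul_sq_le_h x : 0 <= x -> x * k x ^ 2 <= (1 + 2 * d) * h x.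
Proof.
  intros Hx. destruct (Rle_lt_or_eq_dec 0 x Hx) as [Hx'|<-].
  2:{ rewrite prim_0. lra. }
  pose proof (Rpower_pos x d).
  replace (x * k x ^ 2) with ((k x * / Rpower x d) ^ 2 * Rpower x (1 + 2 * d))
    by (rewrite Rpower_plus, Rpower_1 by lra; replace (2 * d) with (d + d) by ring;
        rewrite Rpower_plus; field; lra).
  apply prim_ge_power; auto using pow2_ge_0; try lra.
  - intros; apply pow2_ge_0.
  - intros s Hs. pose proof (profile_lower_bound s x ltac:(lra)).
    assert (0 <= k x * / Rpower x d * Rpower s d).
    { pose proof (k_ge0 x). pose proof (Rpower_pos s d).
      pose proof (Rinv_0_lt_compat _ H). apply Rmult_le_pos; [|lra]. nra. }
    replace (2 * d) with (d + d) by ring. rewrite Rpower_plus.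
    unfold sq. replace ((k x * / Rpower x d) ^ 2 * (Rpower s d * Rpower s d))
      with ((k x * / Rpower x d * Rpower s d) ^ 2) by ring.
    apply pow_incr. lra.
Qed.

Local Notation kmax x := (Rmax (sqrt (2 * (1 + 2 * d))) (k x)).

Lemma rho_ge x : 0 <= x -> sqrt 2 * x <= rho x.
Proof.
  intros Hx. rewrite <- prim_const.
  apply prim_le; auto using continuous_const. intros; apply profile_ge_sqrt2.
Qed.

Lemma h_ge x : 0 <= x -> 2 * x <= h x.
Proof.
  intros Hx. rewrite <- prim_const.
  apply prim_le; auto using continuous_const. intros; apply k_sq_ge2.
Qed.

Lemma h_le x : 0 <= x -> h x <= x * k x ^ 2 + 4 * d * x.
Proof.
  intros Hx. replace (x * k x ^ 2 + 4 * d * x) with ((k x ^ 2 + 4 * d) * x) by ring.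
  rewrite <- prim_const.
  apply prim_le; auto using continuous_const. intros; apply profile_sq_le_add; lra.
Qed.

Lemma rho_le_kmax x : 0 <= x -> rho x <= kmax x * x.
Proof.
  intros Hx. rewrite <- prim_const.
  apply prim_le; auto using continuous_const. intros; apply profile_le_max; lra.
Qed.

Lemma h_le_kmax_rho x : 0 <= x -> h x <= kmax x * rho x.
Proof.
  intros Hx. rewrite <- prim_scal by exact k_cont.
  apply prim_le; auto.
  - intros t. apply (continuous_scal_r _ k), k_cont.
  - intros s Hs. pose proof (profile_le_max s x Hs). pose proof (k_ge0 s).
    unfold sq. nra.
Qed.

Lemma kmax_mul_le x : 0 <= x -> x * kmax x <= (1 + d) * rho x.
Proof.
  intros Hx. unfold Rmax. destruct Rle_dec; [apply mul_le_rho, Hx|].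
  assert (Hc : sqrt (2 * (1 + 2 * d)) <= sqrt 2 * (1 + d)).
  { rewrite <- (sqrt_pow2 (1 + d)) by lra. rewrite <- sqrt_mult by nra.
    apply sqrt_le_1_alt. nra. }
  pose proof (rho_ge x Hx). pose proof (sqrt_pos 2). nra.
Qed.

Lemma mul_h_le_rho_sq x : 0 <= x -> x * h x <= (1 + d) ^ 2 * rho x ^ 2.
Proof.
  intros Hx. pose proof (h_le_kmax_rho x Hx). pose proof (kmax_mul_le x Hx).
  pose proof (rho_ge x Hx). pose proof (sqrt_pos 2).
  assert (x * h x <= x * kmax x * rho x) by nra.
  assert (x * kmax x * rho x <= (1 + d) * rho x * rho x) by (apply Rmult_le_compat_r; nra).
  nra.
Qed.

Lemma mul_sq_sub_h_le x : 0 <= x ->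
  x * k x ^ 2 - h x <= 2 * d * (1 + d) / (1 + 2 * d) * rho x * k x.
Proof.
  intros Hx. pose proof (mul_le_rho x Hx). pose proof (mul_sq_le_h x Hx). pose proof (k_ge0 x).
  apply (Rmult_le_reg_l (1 + 2 * d)); [lra|].
  replace ((1 + 2 * d) * (2 * d * (1 + d) / (1 + 2 * d) * rho x * k x))
    with (2 * d * ((1 + d) * rho x * k x)) by (field; lra).
  assert (x * k x ^ 2 <= (1 + d) * rho x * k x) by nra.
  nra.
Qed.

Lemma rho_mul_le_h t : 0 <= t -> rho t * k t <= (1 + 2 * d) * h t.
Proof.
  intros Ht. pose proof (rho_le_kmax t Ht). pose proof (mul_sq_le_h t Ht).
  pose proof (h_ge t Ht). pose proof (k_ge0 t).
  unfold Rmax in *. destruct Rle_dec as [Hl|Hl].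
  - assert (rho t * k t <= k t * t * k t) by (apply Rmult_le_compat_r; lra). nra.
  - set (c := sqrt (2 * (1 + 2 * d))) in *.
    assert (Hc2 : c * c = 2 * (1 + 2 * d)) by (apply sqrt_sqrt; lra).
    assert (rho t * k t <= c * t * k t) by (apply Rmult_le_compat_r; lra).
    assert (c * t * k t <= c * t * c).
    { apply Rmult_le_compat_l; [apply Rmult_le_pos; [apply sqrt_pos|]|]; lra. }
    nra.
Qed.

Lemma rho_sq_le_prim_h x : 0 <= x -> rho x ^ 2 <= 2 * (1 + 2 * d) * prim h x.
Proof.
  intros Hx.
  set (F := fun t => 2 * (1 + 2 * d) * prim h t - rho t * rho t).
  enough (0 <= F x) by (unfold F in *; simpl; lra).
  apply (nonneg_of_derive_nonneg F (fun t => 2 * (1 + 2 * d) * h t - 2 * rho t * k t)).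
  - exact Hx.
  - unfold F. rewrite !prim_0. ring.
  - intros t. apply is_derive_Reals.
    assert (Dh := prim_derive h t (prim_cont (sq k) sqk_cont)).
    assert (Drho := prim_derive k t k_cont).
    unfold F. auto_derive.
    + repeat first [exact I | split | (eexists; eassumption)].
    + replace (Derive (fun u : R => prim h u) t) with (h t)
        by (symmetry; apply is_derive_unique; exact Dh).
      replace (Derive (fun u : R => rho u) t) with (k t)
        by (symmetry; apply is_derive_unique; exact Drho).
      ring.
  - intros t Ht. pose proof (rho_mul_le_h t ltac:(lra)). lra.
Qed.

Lemma h_small s : 0 <= s <= 1 -> h s = 2 * s.
Proof.
  intros Hs. rewrite <- prim_const. unfold prim. apply RInt_ext.
  rewrite Rmin_left, Rmax_right by lra. intros t Ht.
  apply (profile_sq_small k d Hk). lra.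
Qed.

(* With [a = x k(x)^2]: [a <= (1 + 2d) h] by (ii) and [h - a <= 4 d x <= 2 d a] since [k^2 >= 2]. *)
Lemma sum_sq_le_h_mul x : 0 < x ->
  (h x + x * k x ^ 2) ^ 2 <= 4 * (1 + 2 * d) * h x * (x * k x ^ 2).
Proof.
  intros Hx. pose proof (h_ge x ltac:(lra)). pose proof (mul_sq_le_h x ltac:(lra)).
  pose proof (h_le x ltac:(lra)). pose proof (k_sq_ge2 x).
  set (a := x * k x ^ 2) in *.
  assert (Ha : 2 * x <= a) by (unfold a; nra).
  destruct (Rle_or_lt (h x) a).
  - assert (a - h x <= 2 * d * h x) by lra. nra.
  - assert (h x - a <= 4 * d * x) by lra. nra.
Qed.

Lemma psi_derive x : 0 < x ->
  is_derive (fun s => sqrt (s * h s)) x ((h x + x * k x ^ 2) / (2 * sqrt (x * h x))).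
Proof.
  intros Hx. pose proof (h_ge x ltac:(lra)).
  apply (is_derive_sqrt (fun s => s * h s)); [|nra].
  assert (Dh := prim_derive (sq k) x sqk_cont).
  auto_derive.
  - repeat first [exact I | split | (eexists; eassumption)].
  - replace (Derive (fun u : R => h u) x) with (sq k x)
      by (symmetry; apply is_derive_unique; exact Dh).
    unfold sq. ring.
Qed.

Lemma psi_right_derive_0 : right_deriv_lim (fun s => sqrt (s * h s)) 0 (sqrt 2).
Proof.
  intros eps Heps. exists 1. split; [lra|]. intros s Hs.
  rewrite Rplus_0_l, Rmult_0_l, sqrt_0, !h_small by lra.
  replace (s * (2 * s)) with (Rsqr (sqrt 2 * s))
    by (unfold Rsqr; replace (sqrt 2 * s * (sqrt 2 * s)) with (sqrt 2 * sqrt 2 * s * s) by ring;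
        rewrite sqrt_sqrt by lra; ring).
  rewrite sqrt_Rsqr by (pose proof (sqrt_pos 2); nra).
  replace ((sqrt 2 * s - 0) / s - sqrt 2) with 0 by (field; lra).
  rewrite Rabs_R0. exact Heps.
Qed.

Lemma psi_deriv_sq_le x : 0 <= x ->
  pDx (fun s => sqrt (s * h s)) x ^ 2 <= (1 + 2 * d) * k x ^ 2.
Proof.
  intros Hx. destruct (Rle_lt_or_eq_dec 0 x Hx) as [Hx'|<-].
  - rewrite (pDx_pos _ _ _ Hx') by apply is_derive_Reals, psi_derive, Hx'.
    pose proof (h_ge x Hx). pose proof (sum_sq_le_h_mul x Hx').
    assert (Hq : sqrt (x * h x) * sqrt (x * h x) = x * h x) by (apply sqrt_sqrt; nra).
    assert (0 < sqrt (x * h x)) by (apply sqrt_lt_R0; nra).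
    set (q := sqrt (x * h x)) in *.
    apply (Rmult_le_reg_r (4 * (q * q))); [nra|].
    replace (((h x + x * k x ^ 2) / (2 * q)) ^ 2 * (4 * (q * q)))
      with ((h x + x * k x ^ 2) ^ 2) by (field; lra).
    rewrite Hq. lra.
  - rewrite (pDx_zero _ _ psi_right_derive_0), (profile_sq_small k d Hk 0) by lra.
    rewrite <- Rsqr_pow2, Rsqr_sqrt by lra. lra.
Qed.

End Profile.

(** * The profile [g_R(., y)] *)

Definition dzeta (xi xi1 : R -> R) (y t : R) : R :=
  2 + (y * (y - 1) * Rpower t (y - 2) - 2) * xi t + (y * Rpower t (y - 1) - 2 * t) * xi1 t.

(* [zeta] continued by [2 t] to [t <= 0], where it agrees with [zeta] near [0]: this makes it
   differentiable on all of [R]. *)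
Definition zeta_ext (xi : R -> R) (y t : R) : R :=
  if Rlt_dec 0 t then zeta xi t y else 2 * t.

(* [g_R(x, y)^2 = dzeta (min x R)]; clamping below at [1] is harmless since [dzeta = 2] on
   [(0, 1]], and keeps [dzeta] away from [0], where [Rpower] takes junk values. *)
Definition clamp (R0 t : R) : R := Rmax 1 (Rmin t R0).

Lemma clamp_cont R0 t : continuous (clamp R0) t.
Proof.
  apply continuous_of_1_lipschitz. intros u v. unfold clamp, Rmax, Rmin.
  repeat destruct Rle_dec; unfold Rabs; repeat destruct Rcase_abs; lra.
Qed.

Lemma Rmax_1_cont t : continuous (Rmax 1) t.
Proof.
  apply continuous_of_1_lipschitz. intros u v. unfold Rmax.
  repeat destruct Rle_dec; unfold Rabs; repeat destruct Rcase_abs; lra.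
Qed.

Lemma clamp_ge1 R0 t : 1 <= clamp R0 t.
Proof. apply Rmax_l. Qed.

Lemma clamp_le R0 s t : s <= t -> clamp R0 s <= clamp R0 t.
Proof. intros. unfold clamp, Rmax, Rmin. repeat destruct Rle_dec; lra. Qed.

Definition gclamp (xi xi1 : R -> R) (R0 y t : R) : R := sqrt (dzeta xi xi1 y (clamp R0 t)).

Section Cutoff.

Variables (xi xi1 : R -> R).
Hypothesis xi_derive : forall x, 0 < x -> derivable_pt_lim xi x (xi1 x).
Hypothesis xi1_cont : forall x, 0 < x -> continuous xi1 x.
Hypothesis xi_mono : forall a b, 0 <= a -> a <= b -> xi a <= xi b.
Hypothesis xi_zero : forall x, 0 <= x <= 1 -> xi x = 0.
Hypothesis xi_one : forall x, 2 <= x -> xi x = 1.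

Lemma xi_ge0 t : 0 <= t -> 0 <= xi t.
Proof. intros Ht. rewrite <- (xi_zero 0) by lra. apply xi_mono; lra. Qed.

Lemma xi1_ge0 t : 0 < t -> 0 <= xi1 t.
Proof.
  intros Ht. apply Ropp_le_cancel. rewrite Ropp_0.
  apply (derivable_pt_lim_le_of_one_sided (- xi)%F t _ 0 1).
  - apply derivable_pt_lim_opp, xi_derive, Ht.
  - lra.
  - left. intros s Hs. unfold opp_fct.
    assert (xi t <= xi (t + s)) by (apply xi_mono; lra).
    assert (0 <= (xi (t + s) - xi t) / s) by (apply Rdiv_le_0_compat; lra).
    replace ((- xi (t + s) - - xi t) / s) with (- ((xi (t + s) - xi t) / s)) by (field; lra).
    lra.
Qed.

Lemma xi1_small t : 0 < t <= 1 -> xi1 t = 0.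
Proof.
  intros Ht. apply Rle_antisym; [|apply xi1_ge0; lra].
  apply (derivable_pt_lim_le_of_one_sided xi t _ 0 t); [apply xi_derive; lra | lra |].
  right. intros s Hs. rewrite !xi_zero by lra. unfold Rdiv. lra.
Qed.

Lemma xi1_large t : 2 <= t -> xi1 t = 0.
Proof.
  intros Ht. apply Rle_antisym; [|apply xi1_ge0; lra].
  apply (derivable_pt_lim_le_of_one_sided xi t _ 0 1); [apply xi_derive; lra | lra |].
  left. intros s Hs. rewrite !xi_one by lra. unfold Rdiv. lra.
Qed.

Lemma zeta_derive y t : 0 < t -> is_derive (fun s => zeta xi s y) t (dzeta xi xi1 y t).
Proof.
  intros Ht.
  apply (is_derive_ext_loc (fun s => 2 * s + (y * Rpower s (y - 1) - 2 * s) * xi s)).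
  { apply (locally_of_gt _ 0 t Ht). intros s Hs. unfold zeta, rpow.
    destruct Rlt_dec; [reflexivity | lra]. }
  assert (Dxi : is_derive xi t (xi1 t)) by (apply is_derive_Reals, xi_derive, Ht).
  assert (Dp := Rpower_derive t (y - 1) Ht).
  auto_derive.
  - repeat first [exact I | split | (eexists; eassumption)].
  - replace (Derive (fun u : R => Rpower u (y - 1)) t) with ((y - 1) * Rpower t (y - 1 - 1))
      by (symmetry; apply is_derive_unique; exact Dp).
    replace (Derive (fun u : R => xi u) t) with (xi1 t)
      by (symmetry; apply is_derive_unique; exact Dxi).
    unfold dzeta. replace (y - 1 - 1) with (y - 2) by ring. ring.
Qed.

Lemma dzeta_cont y t : 0 < t -> continuous (dzeta xi xi1 y) t.
Proof.
  intros Ht.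
  assert (Cxi : continuous xi t).
  { apply (ex_derive_continuous xi). eexists. apply is_derive_Reals, xi_derive, Ht. }
  apply continuous_Rplus; [apply continuous_Rplus|].
  - apply continuous_const.
  - apply continuous_Rmult; [|exact Cxi]. apply continuous_Rminus; [|apply continuous_const].
    apply continuous_Rmult; [apply continuous_const | apply Rpower_cont, Ht].
  - apply continuous_Rmult; [|apply xi1_cont, Ht]. apply continuous_Rminus.
    + apply continuous_Rmult; [apply continuous_const | apply Rpower_cont, Ht].
    + apply continuous_Rmult; [apply continuous_const | apply continuous_id].
Qed.

Lemma dzeta_small y t : 0 < t <= 1 -> dzeta xi xi1 y t = 2.
Proof. intros Ht. unfold dzeta. rewrite xi_zero, xi1_small by lra. ring. Qed.

Lemma dzeta_large y t : 2 <= t -> dzeta xi xi1 y t = y * (y - 1) * Rpower t (y - 2).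
Proof. intros Ht. unfold dzeta. rewrite xi_one, xi1_large by lra. ring. Qed.

Lemma dzeta_ge2 y t : 2 <= y -> 1 <= t -> 2 <= dzeta xi xi1 y t.
Proof.
  intros Hy Ht. unfold dzeta.
  assert (Hp : 1 <= Rpower t (y - 2)).
  { rewrite <- (Rpower_O t) by lra. apply Rle_Rpower; lra. }
  replace (y - 1) with ((y - 2) + 1) by ring. rewrite Rpower_succ by lra.
  pose proof (xi_ge0 t ltac:(lra)). pose proof (xi1_ge0 t ltac:(lra)).
  assert (2 <= y * (y - 1)) by nra.
  assert (0 <= y * (y - 1) * Rpower t (y - 2) - 2) by nra.
  assert (t <= t * Rpower t (y - 2)) by nra.
  assert (0 <= y * (t * Rpower t (y - 2)) - 2 * t) by nra.
  assert (0 <= (y * (y - 1) * Rpower t (y - 2) - 2) * xi t) by (apply Rmult_le_pos; lra).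
  assert (0 <= (y * (t * Rpower t (y - 2)) - 2 * t) * xi1 t) by (apply Rmult_le_pos; lra).
  lra.
Qed.

Lemma dzeta_mono_large y t1 t2 : 2 <= y -> 2 <= t1 <= t2 -> dzeta xi xi1 y t1 <= dzeta xi xi1 y t2.
Proof.
  intros Hy Ht. rewrite !dzeta_large by lra.
  apply Rmult_le_compat_l; [nra|]. apply Rle_Rpower_l; lra.
Qed.

Lemma gR_eq R0 y s : 2 < R0 -> 0 <= s -> gR xi R0 s y = gclamp xi xi1 R0 y s.
Proof.
  intros HR Hs. unfold gR, gclamp. f_equal.
  destruct (Rle_lt_or_eq_dec 0 s Hs) as [Hs'|<-].
  - assert (Hm : 0 < Rmin s R0) by (unfold Rmin; destruct Rle_dec; lra).
    rewrite (pDx_pos _ _ _ Hm) by apply is_derive_Reals, zeta_derive, Hm.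
    unfold clamp, Rmax. destruct Rle_dec; [reflexivity|].
    rewrite !dzeta_small by lra. reflexivity.
  - rewrite Rmin_left by lra. unfold clamp. rewrite Rmin_left, Rmax_left, dzeta_small by lra.
    apply pDx_zero. intros eps Heps. exists 1. split; [lra|]. intros u Hu.
    unfold zeta. rewrite !xi_zero by lra.
    replace ((2 * (0 + u) + (y * rpow (0 + u) (y - 1) - 2 * (0 + u)) * 0 -
      (2 * 0 + (y * rpow 0 (y - 1) - 2 * 0) * 0)) / u - 2) with 0 by (field; lra).
    rewrite Rabs_R0. exact Heps.
Qed.

Lemma gclamp_cont R0 y t : continuous (gclamp xi xi1 R0 y) t.
Proof.
  apply continuous_sqrt_comp.
  apply (continuous_comp (clamp R0) (dzeta xi xi1 y)); [apply clamp_cont|].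
  apply dzeta_cont. pose proof (clamp_ge1 R0 t). lra.
Qed.

Lemma gclamp_sq R0 y t : 2 <= y -> gclamp xi xi1 R0 y t ^ 2 = dzeta xi xi1 y (clamp R0 t).
Proof.
  intros Hy. unfold gclamp. rewrite <- Rsqr_pow2. apply Rsqr_sqrt.
  pose proof (dzeta_ge2 y _ Hy (clamp_ge1 R0 t)). lra.
Qed.

Lemma profile_gclamp R0 y delta : 2 <= y -> 2 < R0 ->
  (forall x1 x2, 0 < x1 -> x1 <= x2 ->
     gR xi R0 x2 y * Rpower x2 (- delta) <= gR xi R0 x1 y * Rpower x1 (- delta)) ->
  profile (gclamp xi xi1 R0 y) delta.
Proof.
  intros Hy HR Hw. split.
  - apply gclamp_cont.
  - intros t. apply sqrt_pos.
  - intros t. rewrite gclamp_sq by exact Hy. apply dzeta_ge2, clamp_ge1. exact Hy.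
  - intros t Ht. rewrite gclamp_sq by exact Hy. unfold clamp. rewrite Rmax_left.
    + apply dzeta_small. lra.
    + unfold Rmin; destruct Rle_dec; lra.
  - intros x1 x2 H1 H2. rewrite <- !gR_eq by lra. apply Hw; lra.
  - intros s x Hs. apply sqrt_le_1_alt, dzeta_mono_large; [exact Hy|].
    split; [|apply clamp_le; lra]. unfold clamp, Rmax, Rmin; repeat destruct Rle_dec; lra.
Qed.

Lemma zeta_ext_derive y t : is_derive (zeta_ext xi y) t (dzeta xi xi1 y (Rmax 1 t)).
Proof.
  destruct (Rlt_or_le 0 t) as [Ht|Ht].
  - apply (is_derive_ext_loc (fun s => zeta xi s y)).
    { apply (locally_of_gt _ 0 t Ht). intros s Hs. unfold zeta_ext.
      destruct Rlt_dec; [reflexivity | lra]. }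
    unfold Rmax. destruct Rle_dec; [apply zeta_derive, Ht|].
    rewrite (dzeta_small y 1), <- (dzeta_small y t) by lra. apply zeta_derive, Ht.
  - apply (is_derive_ext_loc (fun s => 2 * s)).
    { apply (locally_of_lt _ 1 t); [lra|]. intros s Hs. unfold zeta_ext.
      destruct Rlt_dec; [|reflexivity].
      unfold zeta. rewrite xi_zero, Rmult_0_r, Rplus_0_r by lra. reflexivity. }
    rewrite Rmax_left, dzeta_small by lra.
    auto_derive; auto; ring.
Qed.

Lemma dzeta_Rmax_cont y t : continuous (fun s => dzeta xi xi1 y (Rmax 1 s)) t.
Proof.
  apply (continuous_comp (Rmax 1) (dzeta xi xi1 y)); [apply Rmax_1_cont|].
  apply dzeta_cont. pose proof (Rmax_l 1 t). lra.
Qed.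

Lemma dzeta_clamp_le y R0 t : 2 <= y -> 2 < R0 -> 0 <= t ->
  dzeta xi xi1 y (clamp R0 t) <= dzeta xi xi1 y (Rmax 1 t).
Proof.
  intros Hy HR Ht. unfold clamp. destruct (Rle_or_lt t R0).
  - rewrite Rmin_left by lra. lra.
  - rewrite Rmin_right, (Rmax_right 1 R0), (Rmax_right 1 t) by lra.
    apply dzeta_mono_large; lra.
Qed.

Section Integrals.

Variables (R0 y : R).
Hypothesis HR : 2 < R0.
Hypothesis Hy : 2 <= y.

Local Notation k := (gclamp xi xi1 R0 y).

Let k_cont : forall t, continuous k t := gclamp_cont R0 y.

Lemma hR_eq s : 0 <= s -> hR xi R0 s y = prim (sq k) s.
Proof.
  intros Hs. apply integral_eq_RInt; [lra | | apply ex_RInt_cont, sq_cont, k_cont].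
  intros t Ht. unfold sq. rewrite gR_eq by lra. reflexivity.
Qed.

Lemma rhoR_eq x : 0 <= x -> rhoR xi R0 x y = prim k x.
Proof.
  intros Hx. apply integral_eq_RInt; [lra | | apply ex_RInt_cont, k_cont].
  intros t Ht. apply gR_eq; lra.
Qed.

Lemma phiR_eq x : 0 <= x -> phiR xi R0 x y = prim (prim (sq k)) x.
Proof.
  intros Hx. apply integral_eq_RInt; [lra | | apply ex_RInt_cont, prim_cont, sq_cont, k_cont].
  intros t Ht. apply hR_eq; lra.
Qed.

Lemma pDx_psiR_eq x : 0 <= x ->
  pDx (fun s => psiR xi R0 s y) x = pDx (fun s => sqrt (s * prim (sq k) s)) x.
Proof.
  intros Hx. apply pDx_ext_nonneg; [exact Hx|].
  intros s Hs. unfold psiR. rewrite hR_eq by exact Hs. reflexivity.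
Qed.

Lemma tau_eq x : 0 <= x -> tau xi x y = prim (zeta_ext xi y) x.
Proof.
  intros Hx. apply integral_eq_RInt; [lra | |].
  - intros s Hs. unfold zeta_ext. destruct Rlt_dec; [reflexivity|].
    replace s with 0 by lra. unfold zeta. rewrite xi_zero, !Rmult_0_r, Rplus_0_r by lra.
    reflexivity.
  - apply ex_RInt_cont. intros t. apply (ex_derive_continuous (zeta_ext xi y)).
    eexists. apply zeta_ext_derive.
Qed.

Lemma prim_h_le_prim_zeta x : 0 <= x -> prim (prim (sq k)) x <= prim (zeta_ext xi y) x.
Proof.
  intros Hx. apply (prim_prim_le_of_derive _ _ (fun t => dzeta xi xi1 y (Rmax 1 t))).
  - exact Hx.
  - apply sq_cont, k_cont.
  - apply zeta_ext_derive.
  - apply dzeta_Rmax_cont.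
  - unfold zeta_ext. destruct Rlt_dec; [lra | apply Rmult_0_r].
  - intros t Ht. unfold sq. rewrite gclamp_sq by exact Hy. apply dzeta_clamp_le; lra.
Qed.

End Integrals.

End Cutoff.

Lemma Rmax_cube_nonpos t : t <= 1 -> Rmax ((t - 1) ^ 3) 0 = 0.
Proof.
  intros Ht. apply Rmax_right.
  replace ((t - 1) ^ 3) with (- (1 - t) ^ 3) by ring.
  pose proof (pow_le (1 - t) 3 ltac:(lra)). lra.
Qed.

Theorem mainTheorem20 (xi : R -> R)
  (Hxi_C2 : C2_pos xi)
  (Hxi_mono : forall a b, 0 <= a -> a <= b -> xi a <= xi b)
  (Hxi_low : forall x, 0 <= x <= 3/2 -> xi x = Rmax ((x - 1) ^ 3) 0)
  (Hxi_high : forall x, 2 <= x -> xi x = 1)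
  (delta y0 : R) (Hdelta : 0 < delta < 1/2) (Hy0 : 2 < y0)
  (Hnoninc : forall y R0, 2 <= y <= y0 -> 2 < R0 ->
     forall x1 x2, 0 < x1 -> x1 <= x2 ->
       gR xi R0 x2 y * Rpower x2 (- delta) <= gR xi R0 x1 y * Rpower x1 (- delta)) :
  forall R0 x y, 2 < R0 -> 0 <= x -> 2 <= y <= y0 ->
    x * gR xi R0 x y <= (1 + delta) * rhoR xi R0 x y /\
    x * (gR xi R0 x y) ^ 2 <= (1 + 2 * delta) * hR xi R0 x y /\
    x * hR xi R0 x y <= (1 + delta) ^ 2 * (rhoR xi R0 x y) ^ 2 /\
    x * (gR xi R0 x y) ^ 2 - hR xi R0 x y
      <= 2 * delta * (1 + delta) / (1 + 2 * delta) * rhoR xi R0 x y * gR xi R0 x y /\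
    ((rhoR xi R0 x y) ^ 2 <= 2 * (1 + 2 * delta) * phiR xi R0 x y /\
     2 * (1 + 2 * delta) * phiR xi R0 x y <= 2 * (1 + 2 * delta) * tau xi x y) /\
    (pDx (fun s => psiR xi R0 s y) x) ^ 2 <= (1 + 2 * delta) * (gR xi R0 x y) ^ 2.
Proof.
  intros R0 x y HR Hx Hy.
  destruct Hxi_C2 as [xi1 [xi2 Hc2]].
  assert (Dxi : forall t, 0 < t -> derivable_pt_lim xi t (xi1 t)) by apply Hc2.
  assert (Cxi1 : forall t, 0 < t -> continuous xi1 t).
  { intros t Ht. apply (ex_derive_continuous xi1). exists (xi2 t).
    apply is_derive_Reals, Hc2, Ht. }
  assert (Zxi : forall t, 0 <= t <= 1 -> xi t = 0).
  { intros t Ht. rewrite Hxi_low by lra. apply Rmax_cube_nonpos. lra. }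
  assert (Hk : profile (gclamp xi xi1 R0 y) delta) by (apply profile_gclamp; auto; lra).
  rewrite (gR_eq xi xi1), (rhoR_eq xi xi1), (hR_eq xi xi1), (phiR_eq xi xi1),
    (tau_eq xi xi1), (pDx_psiR_eq xi xi1) by (auto; lra).
  split; [apply (mul_le_rho _ delta); auto|].
  split; [apply (mul_sq_le_h _ delta); auto|].
  split; [apply (mul_h_le_rho_sq _ delta); auto|].
  split; [apply (mul_sq_sub_h_le _ delta); auto|].
  split; [split|apply (psi_deriv_sq_le _ delta); auto].
  - apply (rho_sq_le_prim_h _ delta); auto.
  - apply Rmult_le_compat_l; [lra|]. apply prim_h_le_prim_zeta; auto; lra.
Qed.
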